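(* Every generalized ascending auction is obviously strategy-proof.
   Context: Bidders $i\in N$ have private valuations $v_i$ over bundles of items, with quasi-linear utilities. A generalized ascending auction fixes for each bidder $i$ a base bundle $X_i^B$ and a potential bundle $X_i^P$ with $X_i^B\subseteq X_i^P$. Initially every bidder is active. Each active bidder $i$ faces a clock price $p_i$ for receiving $X_i^P$ instead of $X_i^B$, which over the course of the auction is monotonically (weakly) increasing; when asked, an active bidder either stays or drops out. A bidder who drops out becomes inactive and is awarded $X_i^B$ at price $0$. The auction terminates as soon as it is feasible to allocate $X_i^P$ to all active bidders and $X_i^B$ to all inactive bidders; then each active bidder receives $X_i^P$ and pays her current clock price, and each inactive bidder receives $X_i^B$ and pays $0$. Viewed as a deterministic mechanism (a rooted tree whose internal nodes are assigned to bidders who send messages, with leaves labeled by allocations and payments), a behavior $B_i$ specifies a message at every node of bidder $i$, a profile $B$ determines a path $\mathrm{Path}(B)$ with bundle $f_i(B)$ and payment $p_i(B)$. A strategy $\mathcal S_i$ maps each valuation to a behavior; it is obviously dominant if for every $v_i$, every node $u$ of $i$, every $B_{-i}$ and every profile $B'$ with $u\in\mathrm{Path}(\mathcal S_i(v_i),B_{-i})\cap\mathrm{Path}(B')$ and $B'_i$ sending at $u$ a message different from $\mathcal S_i(v_i)$'s, $v_i(f_i(\mathcal S_i(v_i),B_{-i}))-p_i(\mathcal S_i(v_i),B_{-i})\ge v_i(f_i(B'))-p_i(B')$. A mechanism is obviously strategy-proof if every bidder has an obviously dominant strategy. *)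

From mathcomp Require Import all_boot all_order all_algebra.
Set Implicit Arguments. Unset Strict Implicit. Unset Printing Implicit Defensive.
Import Order.TTheory GRing.Theory Num.Theory.
Local Open Scope ring_scope.

Section Mechanisms.
Variables (N Item : finType) (R : realFieldType).

Definition bundle := {set Item}.
Definition allocation := N -> bundle.

(* A deterministic mechanism: a finite rooted tree whose internal nodes are
   assigned to a bidder, who sends a binary message (true = stay,
   false = drop out); leaves are labeled by allocations and payments. *)
Inductive mech :=
| Leaf of allocation & (N -> R)
| Node of N & mech & mech. (* bidder, child after "true", child after "false" *)

(* Nodes are identified by the history of messages from the root. *)
Fixpoint subtree (T : mech) (h : seq bool) : option mech :=
  match h with
  | [::] => Some T
  | m :: h' => match T with
               | Leaf _ _ => None
               | Node _ ts td => subtree (if m then ts else td) h'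
               end
  end.

Definition node_of (T : mech) (i : N) (u : seq bool) : Prop :=
  exists ts td, subtree T u = Some (Node i ts td).

Definition behavior := seq bool -> bool.
Definition profile := N -> behavior.

Definition upd_profile (B : profile) (i : N) (b : behavior) : profile :=
  fun j => if j == i then b else B j.

Fixpoint path_from (B : profile) (h : seq bool) (T : mech) : seq bool :=
  match T with
  | Leaf _ _ => [::]
  | Node i ts td => let m := B i h in
                    m :: path_from B (rcons h m) (if m then ts else td)
  end.

Fixpoint outcome_from (B : profile) (h : seq bool) (T : mech)
  : allocation * (N -> R) :=
  match T with
  | Leaf f p => (f, p)
  | Node i ts td => let m := B i h in
                    outcome_from B (rcons h m) (if m then ts else td)
  end.

Definition mpath (B : profile) (T : mech) := path_from B [::] T.
Definition outcome (B : profile) (T : mech) := outcome_from B [::] T.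

Definition on_path (B : profile) (T : mech) (u : seq bool) : Prop :=
  prefix u (mpath B T).

Definition utility (v : bundle -> R) (i : N) (o : allocation * (N -> R)) : R :=
  v (o.1 i) - o.2 i.

Definition strategy := (bundle -> R) -> behavior.

Definition obviously_dominant (T : mech) (i : N) (S : strategy) : Prop :=
  forall (v : bundle -> R) (u : seq bool) (B B' : profile),
    node_of T i u ->
    on_path (upd_profile B i (S v)) T u ->
    on_path B' T u ->
    B' i u != S v u ->
    utility v i (outcome B' T) <= utility v i (outcome (upd_profile B i (S v)) T).

Definition OSP (T : mech) : Prop :=
  forall i : N, exists S : strategy, obviously_dominant T i S.

Definition feasible (X : allocation) : bool :=
  [forall i, forall j, (i != j) ==> [disjoint X i & X j]].

Definition upd_price (p : N -> R) (i : N) (q : R) : N -> R :=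
  fun j => if j == i then q else p j.

(* GAA XB XP A p T : T is (the remaining tree of) a generalized ascending
   auction with base bundles XB, potential bundles XP, in the state where A
   is the set of active bidders and p the clock prices. *)
Inductive GAA (XB XP : allocation) : {set N} -> (N -> R) -> mech -> Prop :=
| GAA_end (A : {set N}) (p : N -> R) :
    feasible (fun j => if j \in A then XP j else XB j) ->
    GAA XB XP A p
      (Leaf (fun j => if j \in A then XP j else XB j)
            (fun j => if j \in A then p j else 0))
| GAA_ask (A : {set N}) (p : N -> R) (i : N) (q : R) (ts td : mech) :
    ~~ feasible (fun j => if j \in A then XP j else XB j) ->
    i \in A ->
    p i <= q ->
    GAA XB XP A (upd_price p i q) ts ->
    GAA XB XP (A :\ i) (upd_price p i q) td ->
    GAA XB XP A p (Node i ts td).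

Definition generalized_ascending_auction (XB XP : allocation) (T : mech) : Prop :=
  (forall i, XB i \subset XP i) /\ exists p0 : N -> R, GAA XB XP [set: N] p0 T.

End Mechanisms.

(** Bidder i's obviously dominant strategy is to stay exactly while the clock
price is at most her value gain [v (XP i) - v (XB i)]. Dropping out always
yields [v (XB i)]. Following the strategy guarantees at least [v (XB i)],
since she ends up either dropping (utility [v (XB i)]) or winning [XP i] at a
price below her gain. Once the clock price exceeds her gain, no behavior
yields more than [v (XB i)], since prices only rise. Hence at any node of i,
the worst outcome of the strategy is at least the best outcome of deviating. *)

From mathcomp Require Import all_boot all_order all_algebra.
From mathcomp Require Import lra.
Set Implicit Arguments. Unset Strict Implicit. Unset Printing Implicit Defensive.
Import Order.TTheory GRing.Theory Num.Theory.
Local Open Scope ring_scope.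

Section ClockAuction.
Variables (N Item : finType) (R : realFieldType) (XB XP : N -> {set Item}).

(* [clock_auction A p P T]: like [GAA], without the feasibility side
   conditions, and with the clock prices recorded: [P w] is the price asked
   at the node reached from the root of [T] by the message history [w]. *)
Inductive clock_auction :
    {set N} -> (N -> R) -> (seq bool -> R) -> mech N Item R -> Prop :=
| ClockLeaf (A : {set N}) (p : N -> R) (P : seq bool -> R) :
    clock_auction A p P
      (Leaf (fun j => if j \in A then XP j else XB j)
            (fun j => if j \in A then p j else 0))
| ClockAsk (A : {set N}) (p : N -> R) (P : seq bool -> R) (j : N) ts td :
    j \in A ->
    p j <= P [::] ->
    clock_auction A (upd_price p j (P [::])) (fun w => P (true :: w)) ts ->
    clock_auction (A :\ j) (upd_price p j (P [::])) (fun w => P (false :: w)) td ->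
    clock_auction A p P (Node j ts td).

Lemma GAA_clock_auction A p T :
  GAA XB XP A p T -> exists P, clock_auction A p P T.
Proof.
elim=> {A p T} [A p _ | A p j q ts td _ jA pq _ [Ps Hs] _ [Pd Hd]].
  by exists (fun=> 0); constructor.
exists (fun w => if w is m :: w' then (if m then Ps w' else Pd w') else q).
by constructor.
Qed.

Lemma upd_price_id (p : N -> R) j q : upd_price p j q j = q.
Proof. by rewrite /upd_price eqxx. Qed.

Lemma upd_price_ne (p : N -> R) j k q : k != j -> upd_price p j q k = p k.
Proof. by rewrite /upd_price => /negbTE ->. Qed.

Variables (i : N) (v : {set Item} -> R).

Let gain := v (XP i) - v (XB i).

Definition follows_threshold (P : seq bool -> R) (h : seq bool) (b : behavior) :=
  forall w, b (h ++ w) = (P w <= gain).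

Lemma follows_threshold_rcons P h b m :
  follows_threshold P h b ->
  follows_threshold (fun w => P (m :: w)) (rcons h m) b.
Proof. by move=> Hb w; rewrite cat_rcons Hb. Qed.

Lemma utility_inactive A p P T : clock_auction A p P T -> i \notin A ->
  forall (B : profile N) h, utility v i (outcome_from B h T) = v (XB i).
Proof.
elim=> {A p P T} [A p P | A p P j ts td _ _ _ IHs _ IHd] iA B h /=.
  by rewrite /utility /= (negbTE iA) subr0.
have iAj : i \notin A :\ j by rewrite in_setD1 (negbTE iA) andbF.
by case: (B j h); [apply: IHs | apply: IHd].
Qed.

Lemma utility_drop A p P T : clock_auction (A :\ i) p P T ->
  forall (B : profile N) h, utility v i (outcome_from B h T) = v (XB i).
Proof. by move/utility_inactive; apply; rewrite setD11. Qed.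

Lemma threshold_utility_ge_base A p P T : clock_auction A p P T ->
  i \in A -> p i <= gain ->
  forall (B : profile N) h, follows_threshold P h (B i) ->
  v (XB i) <= utility v i (outcome_from B h T).
Proof.
elim=> {A p P T} [A p P | A p P j ts td _ _ _ IHs Hd IHd] iA pi B h Hb /=.
  by rewrite /utility /= iA; rewrite /gain in pi; lra.
have [ij | ij] := eqVneq i j; first subst j.
  have := Hb [::]; rewrite cats0 => ->.
  case: ifP => qi; last by rewrite (utility_drop Hd).
  by apply: IHs; rewrite ?upd_price_id //; apply: follows_threshold_rcons.
have pji : upd_price p j (P [::]) i = p i by rewrite upd_price_ne.
case: (B j h).
  by apply: IHs; rewrite ?pji //; apply: follows_threshold_rcons.
by apply: IHd; rewrite ?pji ?in_setD1 ?ij //; apply: follows_threshold_rcons.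
Qed.

Lemma overpriced_utility_le_base A p P T : clock_auction A p P T ->
  i \in A -> gain < p i ->
  forall (B : profile N) h, utility v i (outcome_from B h T) <= v (XB i).
Proof.
elim=> {A p P T} [A p P | A p P j ts td _ pq _ IHs Hd IHd] iA pi B h /=.
  by rewrite /utility /= iA; rewrite /gain in pi; lra.
have [ij | ij] := eqVneq i j; first subst j.
  case: (B i h); last by rewrite (utility_drop Hd).
  by apply: IHs; rewrite ?upd_price_id //; apply: lt_le_trans pq.
have pji : upd_price p j (P [::]) i = p i by rewrite upd_price_ne.
case: (B j h); first by apply: IHs; rewrite ?pji.
by apply: IHd; rewrite ?pji ?in_setD1 ?ij.
Qed.

Lemma threshold_obviously_dominant A p P T : clock_auction A p P T ->
  forall u h (B B' : profile N), node_of T i u -> follows_threshold P h (B i) ->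
  prefix u (path_from B h T) -> prefix u (path_from B' h T) ->
  B' i (h ++ u) != (P u <= gain) ->
  utility v i (outcome_from B' h T) <= utility v i (outcome_from B h T).
Proof.
elim=> {A p P T} [A p P | A p P j ts td jA _ Hs IHs Hd IHd] u h B B' Hu Hb.
  by case: u Hu => [|m u] [ts [td]].
case: u Hu => [|m u] Hu /=; last first.
  case/andP=> /eqP <- Hp /andP [/eqP <- Hp'].
  rewrite -cat_rcons; case: m Hu Hp Hp' => Hu Hp Hp' Hne.
    by apply: IHs Hu _ Hp Hp' Hne; apply: follows_threshold_rcons.
  by apply: IHd Hu _ Hp Hp' Hne; apply: follows_threshold_rcons.
case: Hu => ? [?] [ij _ _]; subst j => _ _.
have := Hb [::]; rewrite !cats0 => ->.
case qi: (P [::] <= gain); case: (B' i h) => //= _.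
  rewrite (utility_drop Hd).
  apply: (threshold_utility_ge_base Hs); rewrite ?upd_price_id ?qi //.
  exact: follows_threshold_rcons.
rewrite (utility_drop Hd).
by apply: (overpriced_utility_le_base Hs); rewrite ?upd_price_id // ltNge qi.
Qed.

End ClockAuction.

Theorem lemma2p1 (N Item : finType) (R : realFieldType)
  (XB XP : N -> {set Item}) (T : mech N Item R) :
  generalized_ascending_auction XB XP T -> OSP T.
Proof.
case=> _ [p0 /GAA_clock_auction [P HP]] i.
exists (fun v w => P w <= v (XP i) - v (XB i)).
move=> v u B B' Hu Hon Hon' Hne.
apply: (threshold_obviously_dominant HP Hu _ Hon Hon' Hne).
by move=> w; rewrite /upd_profile eqxx.
Qed.
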